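(* Let $(Q,\le_Q)$ be a well-quasi-ordered set. A quasi-ordered sequence over $Q$ is a finite sequence $s=(s_1,\dots,s_m)\in Q^m$ together with a quasi-order $\precsim_s$ on the index set $\{1,\dots,m\}$ such that $i<j$ implies $i\precsim_s j$. For quasi-ordered sequences $s$ (of length $m$) and $t$ (of length $m'$), write $s\le t$ if there is a strictly increasing map $f:\{1,\dots,m\}\to\{1,\dots,m'\}$ such that for all $i,j$, $i\precsim_s j$ if and only if $f(i)\precsim_t f(j)$, and for all $i$, $s_i\le_Q t_{f(i)}$. Then $\le$ is a well-quasi-order on the set of quasi-ordered sequences over $Q$.
   Context: A quasi-order is a reflexive, transitive relation. A well-quasi-order is a quasi-order such that every infinite sequence $x_0,x_1,\dots$ has indices $i<j$ with $x_i\le x_j$. *)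

(* plain Prop-valued definitions. Indices are 0-based:
   {1..m} of the paper is represented as {0..m-1}. *)

Definition quasi_order {A : Type} (le : A -> A -> Prop) : Prop :=
  (forall x, le x x) /\ (forall x y z, le x y -> le y z -> le x z).

Definition wqo {A : Type} (le : A -> A -> Prop) : Prop :=
  quasi_order le /\
  (forall x : nat -> A, exists i j, i < j /\ le (x i) (x j)).

(* A quasi-ordered sequence over Q: a length m, entries s_0..s_{m-1}
   (values of qs_elt at indices >= m are irrelevant), and a quasi-order
   qs_rel on the index set {0..m-1} extending the natural order. *)
Record qoseq (Q : Type) := QOSeq {
  qs_len : nat;
  qs_elt : nat -> Q;
  qs_rel : nat -> nat -> Prop;
  qs_refl : forall i, i < qs_len -> qs_rel i i;
  qs_trans : forall i j k, i < qs_len -> j < qs_len -> k < qs_len ->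
    qs_rel i j -> qs_rel j k -> qs_rel i k;
  qs_mono : forall i j, i < j -> j < qs_len -> qs_rel i j
}.
Arguments qs_len {Q}.
Arguments qs_elt {Q}.
Arguments qs_rel {Q}.

Definition qoseq_le {Q : Type} (leQ : Q -> Q -> Prop) (s t : qoseq Q) : Prop :=
  exists f : nat -> nat,
    (forall i, i < qs_len s -> f i < qs_len t) /\
    (forall i j, i < j -> j < qs_len s -> f i < f j) /\
    (forall i j, i < qs_len s -> j < qs_len s ->
       (qs_rel s i j <-> qs_rel t (f i) (f j))) /\
    (forall i, i < qs_len s -> leQ (qs_elt s i) (qs_elt t (f i))).

From Stdlib Require Import List Arith Lia Classical ClassicalEpsilon.
Import ListNotations.

(* Since [i < j] forces [i ≾ j], the index quasi-order of a quasi-ordered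
   sequence is total and its equivalence classes are intervals: the sequence
   is a word of words (its blocks), and [i ≾ j] says that the block of [i]
   does not come after that of [j].  A Higman embedding of the block words,
   whose letters are themselves Higman-embedded, yields an embedding of
   quasi-ordered sequences: blocks go to distinct blocks in increasing order,
   so the index quasi-orders are both preserved and reflected.  Hence two
   applications of Higman's lemma, proved by Nash-Williams' minimal bad
   sequence argument, give the theorem. *)

Definition strict_mono (f : nat -> nat) : Prop := forall i j, i < j -> f i < f j.

Lemma strict_mono_succ (u : nat -> nat) : (forall k, u k < u (S k)) -> strict_mono u.
Proof.
  intros Hu i j Hij; induction Hij as [|j _ IH]; [apply Hu | specialize (Hu j); lia].
Qed.

Lemma strict_mono_le_iff (g : nat -> nat) :
  strict_mono g -> forall k l, g k <= g l <-> k <= l.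
Proof.
  intros Hg k l; split; intros Hkl.
  - destruct (le_lt_dec k l) as [|Hlk]; [assumption|].
    specialize (Hg _ _ Hlk); lia.
  - destruct (Nat.eq_dec k l) as [->|Hne]; [lia|].
    specialize (Hg k l ltac:(lia)); lia.
Qed.

Section WqoChain.
Context {A : Type} (R : A -> A -> Prop).
Hypothesis HR : wqo R.

(* Otherwise the points with no later point above them form a bad
   subsequence. *)
Lemma wqo_eventually_extendable (x : nat -> A) :
  exists N, forall n, N <= n -> exists m, n < m /\ R (x n) (x m).
Proof.
  apply NNPP; intros Hnot.
  assert (Hterm : forall N, exists n, N <= n /\ forall m, n < m -> ~ R (x n) (x m)).
  { intros N; apply NNPP; intros HN; apply Hnot; exists N; intros n Hn.
    apply NNPP; intros Hn'; apply HN; exists n; split; [assumption|].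
    intros m Hm Hnm; apply Hn'; eauto. }
  destruct (choice _ Hterm) as [t Ht].
  set (u := fun k => Nat.iter k (fun n => t (S n)) (t 0)).
  assert (Hu : strict_mono u).
  { apply strict_mono_succ; intros k; exact (proj1 (Ht (S (u k)))). }
  assert (Hu_term : forall k m, u k < m -> ~ R (x (u k)) (x m))
    by (intros [|k]; apply Ht).
  destruct (proj2 HR (fun k => x (u k))) as (i & j & Hij & Hr).
  exact (Hu_term i (u j) (Hu i j Hij) Hr).
Qed.

Lemma wqo_chain (x : nat -> A) :
  exists phi, strict_mono phi /\ forall k l, k < l -> R (x (phi k)) (x (phi l)).
Proof.
  destruct (wqo_eventually_extendable x) as [N HN].
  destruct (choice (fun n m => N <= n -> n < m /\ R (x n) (x m))) as [next Hnext].
  { intros n; destruct (le_lt_dec N n) as [Hn|Hn].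
    - destruct (HN n Hn) as [m Hm]; exists m; auto.
    - exists 0; lia. }
  set (phi := fun k => Nat.iter k next N).
  assert (HphiN : forall k, N <= phi k).
  { induction k as [|k IH]; [apply le_n|].
    specialize (Hnext (phi k) IH); simpl; fold (phi k); lia. }
  assert (Hstep : forall k, phi k < phi (S k) /\ R (x (phi k)) (x (phi (S k))))
    by (intros k; exact (Hnext _ (HphiN k))).
  exists phi; split.
  - apply strict_mono_succ; intros k; apply Hstep.
  - intros k l Hkl; induction Hkl as [|l _ IH]; [apply Hstep|].
    apply (proj2 (proj1 HR) _ _ _ IH), Hstep.
Qed.

End WqoChain.

Section Higman.
Context {A : Type} (R : A -> A -> Prop).

Inductive emb : list A -> list A -> Prop :=
| emb_nil l : emb [] l
| emb_skip l1 b l2 : emb l1 l2 -> emb l1 (b :: l2)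
| emb_cons a l1 b l2 : R a b -> emb l1 l2 -> emb (a :: l1) (b :: l2).

Lemma emb_quasi_order : quasi_order R -> quasi_order emb.
Proof.
  intros [Hrefl Htrans]; split.
  - intros l; induction l as [|a l IH]; [apply emb_nil | apply emb_cons; auto].
  - intros l1 l2 l3 H12 H23; revert l1 H12.
    induction H23 as [l|l2 b l3 _ IH|a l2 b l3 Hab _ IH]; intros l1 H12.
    + inversion H12; apply emb_nil.
    + apply emb_skip, IH, H12.
    + inversion H12; subst.
      * apply emb_nil.
      * apply emb_skip, IH; assumption.
      * apply emb_cons; [eapply Htrans; eassumption | apply IH; assumption].
Qed.

Definition good (x : nat -> list A) : Prop := exists i j, i < j /\ emb (x i) (x j).

Definition agree_below (n : nat) (x y : nat -> list A) : Prop :=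
  forall i, i < n -> x i = y i.

Definition min_bad_extension (x : nat -> list A) (n : nat) (y : nat -> list A) : Prop :=
  ~ good y /\ agree_below n y x /\
  forall z, ~ good z -> agree_below n z x -> length (y n) <= length (z n).

Lemma min_bad_extension_exists x n : ~ good x -> exists y, min_bad_extension x n y.
Proof.
  intros Hx.
  destruct (dec_inh_nat_subset_has_unique_least_element
              (fun k => exists y, ~ good y /\ agree_below n y x /\ length (y n) = k))
    as (k & ((y & Hy & Hyx & Hk) & Hmin) & _).
  - intros k; apply classic.
  - exists (length (x n)), x; split; [exact Hx | split; [intros i _ |]; reflexivity].
  - exists y; repeat split; auto.
    intros z Hz Hzx; rewrite Hk; apply Hmin; eauto.
Qed.

Definition minimal_bad (g : nat -> list A) : Prop :=
  ~ good g /\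
  forall n y, ~ good y -> agree_below n y g -> length (g n) <= length (y n).

Section MinimalBadSequence.
Variable x0 : nat -> list A.
Hypothesis x0_bad : ~ good x0.

Fixpoint approx (n : nat) : nat -> list A :=
  match n with
  | 0 => x0
  | S n => epsilon (inhabits x0) (min_bad_extension (approx n) n)
  end.

Lemma approx_bad n : ~ good (approx n).
Proof.
  induction n as [|n IH]; [exact x0_bad|].
  exact (proj1 (epsilon_spec (inhabits x0) _ (min_bad_extension_exists _ n IH))).
Qed.

Lemma approx_succ n : min_bad_extension (approx n) n (approx (S n)).
Proof. exact (epsilon_spec (inhabits x0) _ (min_bad_extension_exists _ n (approx_bad n))). Qed.

Lemma approx_stable i n m : i < n -> n <= m -> approx m i = approx n i.
Proof.
  intros Hi Hnm; induction Hnm as [|m Hnm IH]; [reflexivity|].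
  rewrite <- IH; apply (proj1 (proj2 (approx_succ m))); lia.
Qed.

Definition min_bad (n : nat) : list A := approx (S n) n.

Lemma minimal_bad_min_bad : minimal_bad min_bad.
Proof.
  split.
  - intros (i & j & Hij & Hemb); apply (approx_bad (S j)).
    exists i, j; split; [assumption|].
    rewrite (approx_stable i (S i) (S j)) by lia; exact Hemb.
  - intros n y Hy Hyg; apply (proj2 (proj2 (approx_succ n))); [assumption|].
    intros i Hi; rewrite Hyg by assumption; symmetry; apply approx_stable; lia.
Qed.

End MinimalBadSequence.

Lemma not_good_nonempty x n : ~ good x -> x n <> [].
Proof.
  intros Hx Hn; apply Hx; exists n, (S n); split; [lia|].
  rewrite Hn; apply emb_nil.
Qed.

(* Replacing [g] from [phi 0] on by the tails of the terms [g (phi k)], whose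
   heads form an [R]-chain, gives a bad sequence shorter than [g] at
   [phi 0]. *)
Lemma no_minimal_bad : wqo R -> forall g, ~ minimal_bad g.
Proof.
  intros HR g [Hg Hmin].
  destruct (choice (fun n (p : A * list A) => g n = fst p :: snd p)) as [ht Hht].
  { intros n; destruct (g n) as [|a t] eqn:Hgn.
    - exfalso; exact (not_good_nonempty g n Hg Hgn).
    - exists (a, t); reflexivity. }
  destruct (wqo_chain R HR (fun n => fst (ht n))) as (phi & Hphi & Hchain).
  set (N := phi 0).
  assert (HN : forall k, N <= phi k)
    by (intros [|k]; [apply le_n | specialize (Hphi 0 (S k)); lia]).
  set (y := fun i => if i <? N then g i else snd (ht (phi (i - N)))).
  assert (Hyg : agree_below N y g)
    by (intros i Hi; unfold y; rewrite (proj2 (Nat.ltb_lt _ _) Hi); reflexivity).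
  assert (Hshort : length (y N) < length (g N))
    by (unfold y; rewrite Nat.ltb_irrefl, Nat.sub_diag, (Hht N); fold N; simpl; lia).
  assert (Hy : good y)
    by (apply NNPP; intros Hy; specialize (Hmin N y Hy Hyg); lia).
  destruct Hy as (i & j & Hij & Hemb); apply Hg; unfold y in Hemb.
  destruct (Nat.ltb_spec i N), (Nat.ltb_spec j N); [| | lia |].
  - exists i, j; auto.
  - exists i, (phi (j - N)); split; [specialize (HN (j - N)); lia|].
    rewrite (Hht (phi (j - N))); apply emb_skip, Hemb.
  - exists (phi (i - N)), (phi (j - N)); split; [apply Hphi; lia|].
    rewrite (Hht (phi (i - N))), (Hht (phi (j - N))).
    apply emb_cons; [apply Hchain; lia | exact Hemb].
Qed.

Theorem higman : wqo R -> wqo emb.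
Proof.
  intros HR; split; [exact (emb_quasi_order (proj1 HR))|].
  intros x; apply NNPP; intros Hx.
  exact (no_minimal_bad HR (min_bad x) (minimal_bad_min_bad x Hx)).
Qed.

End Higman.

Section Blocks.
Context {A : Type}.

Fixpoint block_index (L : list (list A)) (p : nat) : nat :=
  match L with
  | [] => 0
  | B :: L => if p <? length B then 0 else S (block_index L (p - length B))
  end.

Lemma block_index_lt B L p : p < length B -> block_index (B :: L) p = 0.
Proof. intros Hp; simpl; rewrite (proj2 (Nat.ltb_lt _ _) Hp); reflexivity. Qed.

Lemma block_index_ge B L p :
  length B <= p -> block_index (B :: L) p = S (block_index L (p - length B)).
Proof. intros Hp; simpl; rewrite (proj2 (Nat.ltb_ge _ _) Hp); reflexivity. Qed.

Lemma block_index_add B L p : block_index (B :: L) (length B + p) = S (block_index L p).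
Proof. rewrite block_index_ge by lia; do 2 f_equal; lia. Qed.

Section Embeddings.
Variable R : A -> A -> Prop.

Definition index_emb (l1 l2 : list A) (f : nat -> nat) : Prop :=
  strict_mono f /\
  forall i a, nth_error l1 i = Some a -> exists b, nth_error l2 (f i) = Some b /\ R a b.

Definition index_app (n m : nat) (e f : nat -> nat) (i : nat) : nat :=
  if i <? n then e i else m + f (i - n).

Lemma index_emb_lt l1 l2 f i : index_emb l1 l2 f -> i < length l1 -> f i < length l2.
Proof.
  intros [_ Hf] Hi.
  destruct (nth_error l1 i) as [a|] eqn:Ha; [|apply nth_error_Some in Hi; contradiction].
  destruct (Hf i a Ha) as (b & Hb & _).
  apply nth_error_Some; rewrite Hb; discriminate.
Qed.

Lemma index_emb_shift l1 l2 p f :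
  index_emb l1 l2 f -> index_emb l1 (p ++ l2) (fun i => length p + f i).
Proof.
  intros [Hf Hpt]; split; [intros i j Hij; specialize (Hf i j Hij); lia|].
  intros i a Ha; rewrite nth_error_app2, Nat.add_comm, Nat.add_sub by lia.
  exact (Hpt i a Ha).
Qed.

Lemma index_emb_app a l1 b l2 e f : index_emb a b e -> index_emb l1 l2 f ->
  index_emb (a ++ l1) (b ++ l2) (index_app (length a) (length b) e f).
Proof.
  intros He [Hf Hpt]; unfold index_app; split.
  - intros i j Hij.
    destruct (Nat.ltb_spec i (length a)) as [Hi|Hi], (Nat.ltb_spec j (length a)) as [Hj|Hj].
    + apply (proj1 He), Hij.
    + pose proof (index_emb_lt _ _ _ _ He Hi); lia.
    + lia.
    + specialize (Hf (i - length a) (j - length a) ltac:(lia)); lia.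
  - intros i x Hx; destruct (Nat.ltb_spec i (length a)) as [Hi|Hi].
    + rewrite nth_error_app1 in Hx by assumption.
      rewrite nth_error_app1 by exact (index_emb_lt _ _ _ _ He Hi).
      exact (proj2 He i x Hx).
    + rewrite nth_error_app2 in Hx by assumption.
      rewrite nth_error_app2, Nat.add_comm, Nat.add_sub by lia.
      exact (Hpt _ x Hx).
Qed.

Lemma emb_index_emb l1 l2 : emb R l1 l2 -> exists f, index_emb l1 l2 f.
Proof.
  induction 1 as [l|l1 b l2 _ [f Hf]|a l1 b l2 Hab _ [f Hf]].
  - exists (fun i => i); split; [intros i j Hij; exact Hij|].
    intros [|i] x Hx; discriminate.
  - exists (fun i => length [b] + f i); exact (index_emb_shift _ _ [b] _ Hf).
  - exists (index_app 1 1 (fun i => i) f).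
    apply (index_emb_app [a] l1 [b] l2); [|exact Hf].
    split; [intros i j Hij; exact Hij|].
    intros [|[|i]] x Hx; try discriminate.
    injection Hx as <-; exists b; split; [reflexivity | exact Hab].
Qed.

Definition block_emb (L1 L2 : list (list A)) (f g : nat -> nat) : Prop :=
  index_emb (concat L1) (concat L2) f /\ strict_mono g /\
  forall i, i < length (concat L1) -> block_index L2 (f i) = g (block_index L1 i).

Lemma block_emb_skip B L1 L2 f g : block_emb L1 L2 f g ->
  block_emb L1 (B :: L2) (fun i => length B + f i) (fun k => S (g k)).
Proof.
  intros (Hf & Hg & Hblk); split; [|split].
  - exact (index_emb_shift _ _ B _ Hf).
  - intros k l Hkl; specialize (Hg k l Hkl); lia.
  - intros i Hi; rewrite block_index_add, Hblk by exact Hi; reflexivity.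
Qed.

Lemma block_emb_cons a L1 b L2 e f g : index_emb a b e -> block_emb L1 L2 f g ->
  block_emb (a :: L1) (b :: L2) (index_app (length a) (length b) e f)
    (fun k => match k with 0 => 0 | S k => S (g k) end).
Proof.
  intros He (Hf & Hg & Hblk); split; [|split].
  - exact (index_emb_app _ _ _ _ _ _ He Hf).
  - intros [|k] [|l] Hkl; [lia | lia | lia | specialize (Hg k l ltac:(lia)); lia].
  - intros i Hi; simpl in Hi; rewrite length_app in Hi; unfold index_app.
    destruct (Nat.ltb_spec i (length a)) as [Hia|Hia].
    + rewrite (block_index_lt a L1 i Hia), block_index_lt
        by exact (index_emb_lt _ _ _ _ He Hia).
      reflexivity.
    + rewrite (block_index_ge a L1 i Hia), block_index_add, Hblk by lia.
      reflexivity.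
Qed.

Lemma emb_block_emb L1 L2 : emb (emb R) L1 L2 -> exists f g, block_emb L1 L2 f g.
Proof.
  induction 1 as [L|L1 B L2 _ (f & g & Hfg)|a L1 b L2 Hab _ (f & g & Hfg)].
  - exists (fun i => i), (fun k => k).
    split; [|split; [intros k l Hkl; exact Hkl | intros i Hi; simpl in Hi; lia]].
    split; [intros i j Hij; exact Hij | intros [|i] x Hx; discriminate].
  - eexists; eexists; exact (block_emb_skip B _ _ _ _ Hfg).
  - destruct (emb_index_emb a b Hab) as [e He].
    eexists; eexists; exact (block_emb_cons _ _ _ _ _ _ _ He Hfg).
Qed.

End Embeddings.

Definition block_decomposition (L : list (list A)) (n : nat) (e : nat -> A)
    (r : nat -> nat -> Prop) : Prop :=
  concat L = map e (seq 0 n) /\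
  forall i j, i < n -> j < n -> (r i j <-> block_index L i <= block_index L j).

Lemma map_seq_succ (e : nat -> A) n :
  map e (seq 0 (S n)) = e 0 :: map (fun i => e (S i)) (seq 0 n).
Proof. simpl; rewrite <- seq_shift, map_map; reflexivity. Qed.

Section Extension.
Variables (n : nat) (e : nat -> A) (r : nat -> nat -> Prop).
Hypothesis r_refl : forall i, i < S n -> r i i.
Hypothesis r_trans : forall i j k, i < S n -> j < S n -> k < S n ->
  r i j -> r j k -> r i k.
Hypothesis r_mono : forall i j, i < j -> j < S n -> r i j.
Variable L : list (list A).
Hypothesis L_tail : block_decomposition L n (fun i => e (S i)) (fun i j => r (S i) (S j)).

Lemma block_decomposition_new_block :
  ~ (0 < n /\ r 1 0) -> block_decomposition ([e 0] :: L) (S n) e r.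
Proof.
  intros Hsplit; destruct L_tail as [Hconcat Hrel]; split.
  - rewrite map_seq_succ, <- Hconcat; reflexivity.
  - assert (Hs : forall p, block_index ([e 0] :: L) (S p) = S (block_index L p))
      by exact (block_index_add [e 0] L).
    assert (H0 : block_index ([e 0] :: L) 0 = 0) by reflexivity.
    intros [|i] [|j] Hi Hj; rewrite ?Hs, ?H0.
    + split; [lia | intros _; apply r_refl; lia].
    + split; [lia | intros _; apply r_mono; lia].
    + split; [|lia]; intros Hi0; exfalso; apply Hsplit; split; [lia|].
      destruct i as [|i]; [exact Hi0|].
      apply (r_trans 1 (S (S i)) 0); [lia | lia | lia | apply r_mono; lia | exact Hi0].
    + rewrite <- Nat.succ_le_mono; apply Hrel; lia.
Qed.

Hypothesis L_first : block_index L 0 = 0.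

Lemma block_decomposition_merge : 0 < n -> r 1 0 ->
  exists L', block_index L' 0 = 0 /\ block_decomposition L' (S n) e r.
Proof.
  intros Hn H10; destruct L_tail as [Hconcat Hrel].
  destruct L as [|B L1]; [destruct n; [lia | discriminate Hconcat]|].
  exists ((e 0 :: B) :: L1); split; [reflexivity|split].
  - rewrite map_seq_succ, <- Hconcat; reflexivity.
  - assert (Hs : forall p, block_index ((e 0 :: B) :: L1) (S p) = block_index (B :: L1) p)
      by reflexivity.
    assert (H0i : forall i, i < S n -> r i 0 <-> r i 1).
    { intros i Hi; split; intros Hr.
      - apply (r_trans i 0 1); [lia | lia | lia | exact Hr | apply r_mono; lia].
      - apply (r_trans i 1 0); [lia | lia | lia | exact Hr | exact H10]. }
    assert (H0 : block_index ((e 0 :: B) :: L1) 0 = 0) by reflexivity.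
    intros [|i] [|j] Hi Hj; rewrite ?Hs, ?H0.
    + split; [lia | intros _; apply r_refl; lia].
    + split; [lia | intros _; apply r_mono; lia].
    + rewrite H0i, (Hrel i 0), L_first by lia; reflexivity.
    + apply Hrel; lia.
Qed.

End Extension.

(* The conjunct [block_index L 0 = 0] (the first block is nonempty) is what
   lets the induction step add the new first index to the first block. *)
Lemma block_decomposition_exists n : forall (e : nat -> A) (r : nat -> nat -> Prop),
  (forall i, i < n -> r i i) ->
  (forall i j k, i < n -> j < n -> k < n -> r i j -> r j k -> r i k) ->
  (forall i j, i < j -> j < n -> r i j) ->
  exists L, block_index L 0 = 0 /\ block_decomposition L n e r.
Proof.
  induction n as [|n IH]; intros e r Hrefl Htrans Hmono.
  - exists []; split; [reflexivity | split; [reflexivity | intros; lia]].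
  - destruct (IH (fun i => e (S i)) (fun i j => r (S i) (S j))) as (L & Hfirst & HL).
    + intros i Hi; apply Hrefl; lia.
    + intros i j k Hi Hj Hk; apply Htrans; lia.
    + intros i j Hij Hj; apply Hmono; lia.
    + destruct (classic (0 < n /\ r 1 0)) as [[Hn H10]|Hsplit].
      * exact (block_decomposition_merge n e r Hrefl Htrans Hmono L HL Hfirst Hn H10).
      * exists ([e 0] :: L); split; [reflexivity|].
        exact (block_decomposition_new_block n e r Hrefl Htrans Hmono L HL Hsplit).
Qed.

End Blocks.

Lemma nth_error_map_seq {A : Type} (e : nat -> A) n i a :
  nth_error (map e (seq 0 n)) i = Some a <-> i < n /\ e i = a.
Proof.
  rewrite nth_error_map, nth_error_seq.
  destruct (Nat.ltb_spec i n) as [Hi|Hi]; simpl.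
  - split; [intros Ha; injection Ha; auto | intros [_ <-]; reflexivity].
  - split; [discriminate | lia].
Qed.

Lemma qoseq_le_of_block_emb {Q : Type} (leQ : Q -> Q -> Prop) (s t : qoseq Q)
    L1 L2 f g :
  block_decomposition L1 (qs_len s) (qs_elt s) (qs_rel s) ->
  block_decomposition L2 (qs_len t) (qs_elt t) (qs_rel t) ->
  block_emb leQ L1 L2 f g -> qoseq_le leQ s t.
Proof.
  intros [Hs Hrs] [Ht Hrt] ([Hf Hpt] & Hg & Hblk).
  assert (Hlen : length (concat L1) = qs_len s)
    by (rewrite Hs, length_map, length_seq; reflexivity).
  assert (Himg : forall i, i < qs_len s ->
            f i < qs_len t /\ leQ (qs_elt s i) (qs_elt t (f i))).
  { intros i Hi.
    destruct (Hpt i (qs_elt s i)) as (b & Hb & Hle).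
    { rewrite Hs; apply nth_error_map_seq; auto. }
    rewrite Ht in Hb; apply nth_error_map_seq in Hb as [Hfi <-]; auto. }
  exists f; split; [|split; [|split]].
  - intros i Hi; apply Himg, Hi.
  - intros i j Hij _; apply Hf, Hij.
  - intros i j Hi Hj.
    rewrite (Hrs i j Hi Hj), (Hrt (f i) (f j) (proj1 (Himg i Hi)) (proj1 (Himg j Hj))).
    rewrite !Hblk by lia; symmetry; apply strict_mono_le_iff, Hg.
  - intros i Hi; apply Himg, Hi.
Qed.

Lemma qoseq_le_quasi_order {Q : Type} (leQ : Q -> Q -> Prop) :
  quasi_order leQ -> quasi_order (qoseq_le leQ).
Proof.
  intros [Hrefl Htrans]; split.
  - intros s; exists (fun i => i); repeat split; auto.
  - intros s t u (f & Hf1 & Hf2 & Hf3 & Hf4) (g & Hg1 & Hg2 & Hg3 & Hg4).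
    exists (fun i => g (f i)); split; [|split; [|split]].
    + auto.
    + auto.
    + intros i j Hi Hj; rewrite (Hf3 i j Hi Hj); auto.
    + intros i Hi; eapply Htrans; [apply Hf4 | apply Hg4]; auto.
Qed.

Theorem lemma7 (Q : Type) (leQ : Q -> Q -> Prop) :
  wqo leQ -> wqo (qoseq_le leQ).
Proof.
  intros HQ; split; [exact (qoseq_le_quasi_order leQ (proj1 HQ))|].
  intros x.
  destruct (choice (fun n L =>
              block_decomposition L (qs_len (x n)) (qs_elt (x n)) (qs_rel (x n))))
    as [L HL].
  { intros n.
    destruct (block_decomposition_exists (qs_len (x n)) (qs_elt (x n)) (qs_rel (x n)))
      as (L & _ & HL); [apply qs_refl | apply qs_trans | apply qs_mono | eauto]. }
  destruct (proj2 (higman _ (higman _ HQ)) L) as (i & j & Hij & Hemb).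
  destruct (emb_block_emb leQ _ _ Hemb) as (f & g & Hfg).
  exists i, j; split; [exact Hij | exact (qoseq_le_of_block_emb leQ _ _ _ _ _ _ (HL i) (HL j) Hfg)].
Qed.
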